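(* For all $\delta,k\in\mathbb N^+$ and $T_{\max}\ge 4$, there is an infinite family of temporal graphs $\{\mathcal G_n\}_{n\in\mathbb N}$ with lifetime $T_{\max}$ such that each $\mathcal G_n$ has $\Theta(n)$ nodes and the minimum number of rounds required by any Discoverer to win the temporal graph discovery game on $\mathcal G_n$ (with parameters $T_{\max},\delta,k$) grows in $\Omega\big(n(T_{\max}-3)/(\delta k)\big)$.
   Context: A temporal graph $\mathcal G=(V,E,\lambda)$ with lifetime $T_{\max}$ consists of a finite undirected static graph $(V,E)$ and a labeling $\lambda:E\to\{1,\dots,T_{\max}\}$; edge $e$ is present only at time $\lambda(e)$. Infection model with parameter $\delta$: a set $S\subseteq V\times[0,T_{\max}]$ of seed infections is given; a seed $(u,t)$ makes $u$ infected at time $t$; otherwise a susceptible node $u$ becomes infected at time $t$ iff some neighbour $v$ infectious at time $t$ has $\lambda(uv)=t$ (with exactly one infector recorded if several exist). A node infected at time $t$ is infectious at times $t+1,\dots,t+\delta$ and resistant afterwards. The infection log records triples $(u,v,t)$ ($u$ infected $v$ at time $t$; seeds as $(u,u,t)$); a log is consistent with $S$ if some infection chain seeded by $S$ produces it. Temporal graph discovery game with parameters $T_{\max},\delta,k$: the Discoverer knows $V$ and $E$; each round it submits at most $k$ seed infections and the Adversary answers with a consistent infection log under some labeling consistent with all previous answers (adaptively chosen). The Discoverer wins when it submits a labeling that matches the Adversary's final labeling consistent with all logs, i.e. effectively iff the labeling is uniquely determined by the logs. *)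

From mathcomp Require Import all_boot.
Set Implicit Arguments. Unset Strict Implicit. Unset Printing Implicit Defensive.

Definition simple_graph (V : finType) (e : rel V) : Prop :=
  (forall u v, e u v = e v u) /\ (forall u, ~~ e u u).

(* A labeling lambda : E -> {1..Tmax}, represented as a function on pairs of
   nodes; only its values on edges matter (symmetric on edges). *)
Definition valid_labeling (V : finType) (e : rel V) (Tmax : nat)
  (lam : V -> V -> nat) : Prop :=
  forall u v, e u v -> lam u v = lam v u /\ 1 <= lam u v <= Tmax.

(* An infection log: for every node u, either None (never infected) or
   Some (w, t), meaning the triple (w, u, t): w infected u at time t
   (w = u for a seed). *)
Definition infection_log (V : finType) := V -> option (V * nat).

(* A node infected at
   time s is infectious at times s+1 .. s+delta. *)
Definition run (V : finType) (e : rel V) (delta : nat) (lam : V -> V -> nat)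
  (S : seq (V * nat)) (l : infection_log V) : Prop :=
  (forall u w t, l u = Some (w, t) ->
     (w = u /\ (u, t) \in S) \/
     ((u, t) \notin S /\ e w u /\ lam w u = t /\
      exists w' s, l w = Some (w', s) /\ s < t <= s + delta))
  /\
  (forall u t,
     ((u, t) \in S \/
      exists v w' s, e v u /\ l v = Some (w', s) /\ s < t <= s + delta /\
                     lam v u = t) ->
     exists w t', l u = Some (w, t') /\ t' <= t).

Definition history (V : finType) := seq (seq (V * nat) * infection_log V).

Definition consistent_hist (V : finType) (e : rel V) (delta : nat)
  (lam : V -> V -> nat) (h : history V) : Prop :=
  foldr (fun p P => run e delta lam p.1 p.2 /\ P) True h.

Definition determined (V : finType) (e : rel V) (Tmax delta : nat)
  (h : history V) : Prop :=
  forall lam1 lam2,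
    valid_labeling e Tmax lam1 -> valid_labeling e Tmax lam2 ->
    consistent_hist e delta lam1 h -> consistent_hist e delta lam2 h ->
    forall u v, e u v -> lam1 u v = lam2 u v.

Definition valid_query (V : finType) (Tmax k : nat) (S : seq (V * nat)) : bool :=
  (size S <= k) && all (fun p => p.2 <= Tmax) S.

(* [can_win e Tmax delta k r h]: from history h, the Discoverer has a
   strategy guaranteeing a win within r further rounds against every
   adaptive Adversary (which answers with any log consistent with the query
   under some valid labeling consistent with all previous answers). *)
Fixpoint can_win (V : finType) (e : rel V) (Tmax delta k : nat) (r : nat)
  (h : history V) : Prop :=
  match r with
  | 0 => determined e Tmax delta h
  | r'.+1 =>
      determined e Tmax delta h \/
      exists S, valid_query Tmax k S /\
        forall l : infection_log V,
          (exists lam, valid_labeling e Tmax lam /\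
                       consistent_hist e delta lam h /\ run e delta lam S l) ->
          can_win e Tmax delta k r' ((S, l) :: h)
  end.

From mathcomp Require Import all_boot zify.
Set Implicit Arguments. Unset Strict Implicit. Unset Printing Implicit Defensive.

(* The graphs are perfect matchings on n edges, whose labels are independent.
   The Adversary keeps, for each edge, a set of candidate labels, every choice
   of which is consistent with its answers so far.  It answers a query as if
   every node were infected at its first seed time, which is correct unless
   the label of its edge falls in the infectious window (of length delta)
   following a seed of the other endpoint; so only the labels in these windows
   are revealed, and they are discarded from the candidates (if nothing else
   remains the Adversary commits to one label).  A round with k seeds thus
   removes at most delta * k of the n * Tmax initial candidates, and the
   labeling is determined only when at most n remain. *)

Lemma count_predD_le (T : Type) (a b : pred T) s :
  count a s <= count (predD a b) s + count b s.
Proof.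
rewrite -count_predUI; apply: leq_trans (leq_addr _ _).
by apply: sub_count => x /=; case: (b x); case: (a x).
Qed.

Definition in_window (d a c : nat) := a < c <= a + d.

Lemma count_in_window d a Tmax :
  count (in_window d a) (iota 1 Tmax) <= minn d (Tmax - a).
Proof.
rewrite -size_filter -(size_iota a.+1 (minn d (Tmax - a))).
apply: uniq_leq_size; first by rewrite filter_uniq ?iota_uniq.
by move=> c; rewrite mem_filter !mem_iota /in_window; lia.
Qed.

Section FirstSeed.
Variables (V : eqType) (Tmax : nat) (S : seq (V * nat)).

(* [Tmax.+1] stands for "never seeded". *)
Definition first_seed (x : V) : nat :=
  foldr minn Tmax.+1 [seq p.2 | p <- S & p.1 == x].

Lemma first_seed_le x t : (x, t) \in S -> first_seed x <= t.
Proof.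
rewrite /first_seed; elim: S => //= p s IH; rewrite in_cons => /orP [/eqP <- | /IH].
  by rewrite eqxx /= geq_minl.
by case: ifP => //= _ le_t; rewrite geq_min le_t orbT.
Qed.

Lemma first_seed_mem x : first_seed x <= Tmax -> (x, first_seed x) \in S.
Proof.
rewrite /first_seed; elim: S => [|p s IH] /=; first by rewrite ltnn.
case: ifP => /= [/eqP px | _ le_T]; last by rewrite in_cons IH ?orbT.
rewrite /minn; case: ltnP => _ le_T; first by rewrite in_cons -px -surjective_pairing eqxx.
by rewrite in_cons IH ?orbT.
Qed.

Lemma count_window_seeds d x :
  count (in_window d (first_seed x)) (iota 1 Tmax) <= d * count (fun p => p.1 == x) S.
Proof.
apply: leq_trans (count_in_window _ _ _) _.
have [seeded | unseeded] := leqP (first_seed x) Tmax; last first.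
  by rewrite (eqP (ltnW unseeded)) minn0.
have : 0 < count (fun p => p.1 == x) S.
  by rewrite -has_count; apply/hasP; exists (x, first_seed x); rewrite ?first_seed_mem.
by case: count => // c _; rewrite mulnS (leq_trans (geq_minl _ _)) ?leq_addr.
Qed.

End FirstSeed.

Lemma sum_count_eq (I : finType) (X : Type) (f : X -> I) (s : seq X) :
  \sum_(i : I) count (fun x => f x == i) s = size s.
Proof.
elim: s => [|x s IH] /=; first by rewrite big1.
rewrite big_split /= IH (bigD1 (f x)) //= eqxx big1 // => j /negbTE.
by rewrite eq_sym => ->.
Qed.

Lemma eq_run (V : finType) (e : rel V) delta lam S (l1 l2 : infection_log V) :
  l1 =1 l2 -> run e delta lam S l1 -> run e delta lam S l2.
Proof.
move=> same [justified complete]; split=> [u w t | u t].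
  rewrite -same => /justified [seed | [fresh [edge [lam_t [w' [s [log_w time]]]]]]].
    by left.
  by right; do 3 (split=> //); exists w', s; rewrite -same.
move=> infected; rewrite -same; apply: complete.
case: infected => [seed | [v [w' [s [edge [log_v rest]]]]]]; first by left.
by right; exists v, w', s; rewrite same.
Qed.

Notation node n := ('I_n * bool)%type.

Definition mate n (x : node n) : node n := (x.1, ~~ x.2).

Definition matching n : rel (node n) := fun x y => (x.1 == y.1) && (x.2 != y.2).

Lemma mateK n : involutive (@mate n).
Proof. by case=> i b; rewrite /mate negbK. Qed.

Lemma matchingE n (x y : node n) : matching x y = (y == mate x).
Proof. by case: x y => [i []] [j []]; rewrite /matching /mate xpair_eqE eq_sym. Qed.

Lemma simple_graph_matching n : simple_graph (@matching n).
Proof.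
split=> [x y | x]; first by rewrite !matchingE eq_sym (can2_eq (@mateK n) (@mateK n)).
by rewrite matchingE /mate; case: x => i []; rewrite xpair_eqE eqxx.
Qed.

Definition label n (lam : node n -> node n -> nat) (i : 'I_n) := lam (i, false) (i, true).

Lemma label_mate n Tmax lam (x : node n) :
  valid_labeling (@matching n) Tmax lam ->
  [/\ lam x (mate x) = label lam x.1, lam (mate x) x = label lam x.1
    & 0 < label lam x.1 <= Tmax].
Proof.
move=> /(_ (x.1, false) (x.1, true)); rewrite matchingE eqxx => /(_ isT) [sym range].
by case: x sym range => i [] /= sym range; rewrite /label /mate /=.
Qed.

Section AdversaryLog.
Variables (n Tmax d : nat) (S : seq (node n * nat)).

Local Notation first_seed := (first_seed Tmax S).

Definition mate_infects (lam : node n -> node n -> nat) (x : node n) :=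
  in_window d (first_seed (mate x)) (label lam x.1) && (label lam x.1 < first_seed x).

Definition adversary_log lam : infection_log (node n) := fun x =>
  if mate_infects lam x then Some (mate x, label lam x.1)
  else if first_seed x <= Tmax then Some (x, first_seed x) else None.

Lemma mate_infects_mate lam x : mate_infects lam x -> ~~ mate_infects lam (mate x).
Proof. by rewrite /mate_infects mateK /in_window /=; lia. Qed.

Lemma adversary_log_seed lam x :
  ~~ mate_infects lam x -> first_seed x <= Tmax -> adversary_log lam x = Some (x, first_seed x).
Proof. by rewrite /adversary_log => /negbTE -> ->. Qed.

Lemma adversary_log_by_seed lam x : first_seed x <= Tmax ->
  exists w t, adversary_log lam x = Some (w, t) /\ t <= first_seed x.
Proof.
move=> seeded; rewrite /adversary_log; case: ifP => [/andP [_ early] | _].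
  by exists (mate x), (label lam x.1); split; last exact: ltnW.
by rewrite seeded; exists x, (first_seed x).
Qed.

Section ValidLabeling.
Variable lam : node n -> node n -> nat.
Hypothesis lam_valid : valid_labeling (@matching n) Tmax lam.

Lemma adversary_log_justified u w t : adversary_log lam u = Some (w, t) ->
  (w = u /\ (u, t) \in S) \/
  ((u, t) \notin S /\ matching w u /\ lam w u = t /\
   exists w' s, adversary_log lam w = Some (w', s) /\ s < t <= s + d).
Proof.
have [_ lam_mate label_range] := label_mate u lam_valid.
rewrite {1}/adversary_log; case: ifP => [infected [<- <-] | _]; last first.
  by case: ifP => // seeded [<- <-]; left; split; last exact: first_seed_mem.
have [window early] := andP infected.
right; split; first by apply: contraTN early => /(first_seed_le Tmax); rewrite -leqNgt.
split; first by rewrite matchingE mateK.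
split=> //; exists (mate u), (first_seed (mate u)).
rewrite adversary_log_seed ?mate_infects_mate //; move: window label_range; rewrite /in_window; lia.
Qed.

Lemma adversary_log_complete u t : all (fun p => p.2 <= Tmax) S ->
  ((u, t) \in S \/ exists v w' s, matching v u /\ adversary_log lam v = Some (w', s) /\
                                  s < t <= s + d /\ lam v u = t) ->
  exists w t', adversary_log lam u = Some (w, t') /\ t' <= t.
Proof.
move=> S_le [seed | [v [w' [s [+ []]]]]].
  have le_t := first_seed_le Tmax seed; have t_le : t <= Tmax := allP S_le _ seed.
  have [w [t' [-> le_t']]] := adversary_log_by_seed lam (leq_trans le_t t_le).
  by exists w, t'; split; last exact: leq_trans le_t.
rewrite matchingE => /eqP/(canLR (@mateK n)) <-; have [_ -> label_range] := label_mate u lam_valid.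
rewrite /adversary_log mateK /=; case: ifP => [_ [_ <-] | _].
  by move=> [/andP [early _] t_label]; move: early; rewrite t_label ltnn.
case: ifP => // _ [_ <-] [infectious t_label]; subst t.
case: ifP => [_ | /negbT]; first by exists (mate u), (label lam u.1).
rewrite /mate_infects /in_window infectious -leqNgt => late.
rewrite (leq_trans late (proj2 (andP label_range))).
by exists u, (first_seed u).
Qed.

Lemma run_adversary_log : all (fun p => p.2 <= Tmax) S ->
  run (@matching n) d lam S (adversary_log lam).
Proof.
move=> S_le; split=> [u w t | u t]; first exact: adversary_log_justified.
exact: adversary_log_complete.
Qed.

End ValidLabeling.

Definition revealing (i : 'I_n) : pred nat := fun c =>
  in_window d (first_seed (i, false)) c || in_window d (first_seed (i, true)) c.

Lemma mate_infects_revealing lam x : mate_infects lam x -> revealing x.1 (label lam x.1).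
Proof. by case: x => i [] /andP [window _]; rewrite /revealing window ?orbT. Qed.

Lemma eq_adversary_log lam1 lam2 :
  (forall i, label lam1 i = label lam2 i \/
             ~~ revealing i (label lam1 i) && ~~ revealing i (label lam2 i)) ->
  adversary_log lam1 =1 adversary_log lam2.
Proof.
move=> agree x; rewrite /adversary_log; case: (agree x.1) => [same | /andP [hidden1 hidden2]].
  by rewrite /mate_infects same.
by rewrite !(negbTE (contra (@mate_infects_revealing _ x) _)).
Qed.

Lemma count_revealing i :
  count (revealing i) (iota 1 Tmax) <= d * count (fun p => p.1.1 == i) S.
Proof.
have seeds_i : count (fun p => p.1 == (i, false)) S + count (fun p => p.1 == (i, true)) S
               = count (fun p => p.1.1 == i) S.
  rewrite -count_predUI (@eq_count _ (predI _ _) pred0) ?count_pred0 ?addn0.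
    by apply: eq_count => -[[j []] t]; rewrite /= !xpair_eqE ?andbT ?andbF ?orbF.
  by move=> -[[j []] t]; rewrite /= !xpair_eqE ?andbT ?andbF.
rewrite -seeds_i mulnDr; apply: leq_trans (leq_add (count_window_seeds Tmax _ d _)
                                                  (count_window_seeds Tmax _ d _)).
by rewrite -count_predUI leq_addr.
Qed.
End AdversaryLog.

Definition ncand Tmax (P : pred nat) := count P (iota 1 Tmax).

Definition pick_label Tmax (P : pred nat) := nth 0 (filter P (iota 1 Tmax)) 0.

Lemma mem_filter_labels Tmax (P : pred nat) c :
  c \in filter P (iota 1 Tmax) -> P c /\ 0 < c <= Tmax.
Proof. by rewrite mem_filter mem_iota add1n ltnS => /andP [-> ->]. Qed.

Lemma pick_labelP Tmax P :
  0 < ncand Tmax P -> P (pick_label Tmax P) /\ 0 < pick_label Tmax P <= Tmax.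
Proof. by move=> nonempty; apply: mem_filter_labels; rewrite mem_nth ?size_filter. Qed.

Lemma two_labels Tmax P : 1 < ncand Tmax P ->
  exists c1 c2, [/\ c1 != c2, P c1 /\ 0 < c1 <= Tmax & P c2 /\ 0 < c2 <= Tmax].
Proof.
rewrite /ncand -size_filter => two; set s := filter P _ in two *.
exists (nth 0 s 0), (nth 0 s 1).
split; try by apply: mem_filter_labels; rewrite mem_nth // ltnW.
by rewrite nth_uniq ?filter_uniq ?iota_uniq // ltnW.
Qed.

Definition edge_labeling n (f : 'I_n -> nat) : node n -> node n -> nat := fun x _ => f x.1.

Lemma valid_edge_labeling n Tmax (f : 'I_n -> nat) :
  (forall i, 0 < f i <= Tmax) -> valid_labeling (@matching n) Tmax (edge_labeling f).
Proof. by move=> f_range x y; rewrite matchingE => /eqP ->; split; last exact: f_range. Qed.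

Section Adversary.
Variables (n Tmax d : nat).
Implicit Types (h : history (node n)) (R : 'I_n -> pred nat) (S : seq (node n * nat)).

Definition admissible h R :=
  (forall i, 0 < ncand Tmax (R i)) /\
  forall lam, valid_labeling (@matching n) Tmax lam -> (forall i, R i (label lam i)) ->
    consistent_hist (@matching n) d lam h.

Lemma admissible_edge_labeling h R f : admissible h R ->
  (forall i, R i (f i) /\ 0 < f i <= Tmax) ->
  valid_labeling (@matching n) Tmax (edge_labeling f) /\
  consistent_hist (@matching n) d (edge_labeling f) h.
Proof.
move=> [_ consistent] f_ok; have valid := valid_edge_labeling (fun i => proj2 (f_ok i)).
by split=> //; apply: consistent => // i; have [] := f_ok i.
Qed.

Lemma admissible_undetermined h R : admissible h R ->
  n < \sum_(i < n) ncand Tmax (R i) -> ~ determined (@matching n) Tmax d h.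
Proof.
move=> adm many; have [i two] : exists i, 1 < ncand Tmax (R i).
  apply/existsP; apply: contraLR many => /existsPn few.
  by rewrite -leqNgt -[n in _ <= n]card_ord -sum1_card leq_sum // => i _; rewrite leqNgt few.
have [c1 [c2 [c12 c1_ok c2_ok]]] := two_labels two.
pose f c j := if j == i then c else pick_label Tmax (R j).
have f_ok c : R i c /\ 0 < c <= Tmax -> forall j, R j (f c j) /\ 0 < f c j <= Tmax.
  by move=> c_ok j; rewrite /f; case: eqP => [-> // | _]; apply: pick_labelP; case: adm.
have [valid1 consistent1] := admissible_edge_labeling adm (f_ok _ c1_ok).
have [valid2 consistent2] := admissible_edge_labeling adm (f_ok _ c2_ok).
move=> /(_ _ _ valid1 valid2 consistent1 consistent2 (i, false) (i, true)).
by rewrite matchingE eqxx /edge_labeling /f eqxx => /(_ isT) /eqP; apply/negP.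
Qed.

Definition refine_cands S R i : pred nat :=
  let hidden := predD (R i) (revealing Tmax d S i) in
  if 0 < ncand Tmax hidden then hidden else pred1 (pick_label Tmax (R i)).

Lemma refine_cands_sub S R i c :
  0 < ncand Tmax (R i) -> refine_cands S R i c -> R i c.
Proof.
rewrite /refine_cands => nonempty; case: ifP => _ /=; first by case/andP.
by move=> /eqP ->; have [] := pick_labelP nonempty.
Qed.

Lemma refine_cands_gt0 S R i :
  0 < ncand Tmax (R i) -> 0 < ncand Tmax (refine_cands S R i).
Proof.
rewrite /refine_cands => nonempty; case: ifP => // _.
have [_ range] := pick_labelP nonempty.
by rewrite /ncand -has_count; apply/hasP; exists (pick_label Tmax (R i)); rewrite ?mem_iota /=.
Qed.

Lemma ncand_refine_cands S R i :
  ncand Tmax (R i) <= ncand Tmax (refine_cands S R i) + ncand Tmax (revealing Tmax d S i).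
Proof.
apply: leq_trans (count_predD_le _ (revealing Tmax d S i) _) _.
rewrite /refine_cands; case: ifP => // /negbT; rewrite -leqNgt leqn0 => /eqP none.
by rewrite -/(ncand _ _) none leq_add2r.
Qed.

Lemma refine_cands_agree S R i c1 c2 :
  refine_cands S R i c1 -> refine_cands S R i c2 ->
  c1 = c2 \/ ~~ revealing Tmax d S i c1 && ~~ revealing Tmax d S i c2.
Proof.
rewrite /refine_cands; case: ifP => _ /=.
  by move=> /andP [hidden1 _] /andP [hidden2 _]; right; rewrite hidden1.
by move=> /eqP -> /eqP ->; left.
Qed.

Definition answer_labeling S R := edge_labeling (fun i => pick_label Tmax (refine_cands S R i)).

Definition adversary_answer S R := adversary_log Tmax d S (answer_labeling S R).

Lemma answer_labeling_label S R i : 0 < ncand Tmax (R i) ->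
  refine_cands S R i (label (answer_labeling S R) i) /\
  0 < label (answer_labeling S R) i <= Tmax.
Proof. by move=> nonempty; apply: pick_labelP; apply: refine_cands_gt0. Qed.

Lemma adversary_answer_legal h R S : admissible h R -> all (fun p => p.2 <= Tmax) S ->
  exists lam, valid_labeling (@matching n) Tmax lam /\ consistent_hist (@matching n) d lam h /\
              run (@matching n) d lam S (adversary_answer S R).
Proof.
move=> adm S_le; have [nonempty _] := adm.
have answer_ok i : R i (pick_label Tmax (refine_cands S R i)) /\
                   0 < pick_label Tmax (refine_cands S R i) <= Tmax.
  have [refined range] := answer_labeling_label S (nonempty i).
  by split; first exact: refine_cands_sub refined.
have [valid consistent] := admissible_edge_labeling adm answer_ok.
by exists (answer_labeling S R); do 2 split=> //; apply: run_adversary_log.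
Qed.

Lemma admissible_answer h R S : admissible h R -> all (fun p => p.2 <= Tmax) S ->
  admissible ((S, adversary_answer S R) :: h) (refine_cands S R).
Proof.
move=> [nonempty consistent] S_le; split=> [i | lam valid refined].
  exact: refine_cands_gt0.
split; last by apply: consistent => // i; apply: refine_cands_sub (refined i).
have agree : adversary_log Tmax d S lam =1 adversary_answer S R.
  apply: eq_adversary_log => i.
  have [answered _] := answer_labeling_label S (nonempty i).
  by case: (refine_cands_agree (refined i) answered) => [-> | /andP [-> ->]]; [left | right].
exact: eq_run agree (run_adversary_log d valid S_le).
Qed.

Lemma sum_ncand_refine_cands S R :
  \sum_(i < n) ncand Tmax (R i) <= \sum_(i < n) ncand Tmax (refine_cands S R i) + d * size S.
Proof.
rewrite -(sum_count_eq (fun p : node n * nat => p.1.1) S) big_distrr -big_split.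
apply: leq_sum => i _; apply: leq_trans (ncand_refine_cands S R i) _.
by rewrite leq_add2l; apply: count_revealing.
Qed.

Lemma admissible_cannot_win k r h R : admissible h R ->
  n + r * (d * k) < \sum_(i < n) ncand Tmax (R i) -> ~ can_win (@matching n) Tmax d k r h.
Proof.
elim: r h R => [|r IH] h R adm many /=.
  by apply: admissible_undetermined adm _; rewrite mul0n addn0 in many.
case=> [determined | [S [/andP [size_S S_le] win]]].
  by apply: admissible_undetermined adm _ determined; lia.
apply: IH (admissible_answer adm S_le) _ (win _ (adversary_answer_legal adm S_le)).
have := sum_ncand_refine_cands S R; have : d * size S <= d * k by rewrite leq_mul2l size_S orbT.
move: many; rewrite mulSn; lia.
Qed.

Lemma admissible_nil : 0 < Tmax -> admissible [::] (fun _ => predT).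
Proof. by move=> Tmax_gt0; split=> // i; rewrite /ncand count_predT size_iota. Qed.

End Adversary.

Theorem mainTheorem2 :
  exists C : nat, 0 < C /\
  forall delta k Tmax : nat, 0 < delta -> 0 < k -> 4 <= Tmax ->
  exists (V : nat -> finType) (e : forall n, rel (V n)),
    (forall n, simple_graph (e n)) /\
    exists N : nat, forall n : nat, N <= n ->
      n <= C * #|V n| /\ #|V n| <= C * n /\
      forall r : nat, can_win (e n) Tmax delta k r [::] ->
        n * (Tmax - 3) <= C * (r * delta * k).
Proof.
exists 2; split=> // d k Tmax _ _ Tmax_ge4.
exists (fun n => node n : finType), (@matching); split; first exact: simple_graph_matching.
exists 0 => n _; rewrite card_prod card_ord card_bool; split; first lia.
split=> [|r win]; first lia.
rewrite leqNgt; apply/negP => fast.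
apply: admissible_cannot_win (admissible_nil n d _) _ win; first lia.
rewrite (eq_bigr (fun _ => Tmax)) => [|i _]; last by rewrite /ncand count_predT size_iota.
rewrite sum_nat_const card_ord; nia.
Qed.
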